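(* Let $W\in\{\mathrm{A}_{\frac12\infty},\mathrm{D}_{\frac12\infty}\}$ and $d\ge1$. The Coxeter element $Cox^{(d)}_W$, an endomorphism of $H_{W,\mathbb{C}}$, extends to an invertible bounded operator (with bounded inverse) on $\overline H_{W,\mathbb{C}}$.
   Context: Index sets: $C_{W,0}=\{c_0^{(n)}:n\ge1\}$ (type A) or $\{c_0^{(n)}:n\ge1\}\cup\{c_0^\pm\}$ (type D); $C_{W,1}=\{c_1^{(n)}:n\ge1\}$; $C_W=C_{W,0}\sqcup C_{W,1}$; $c_0^{(n)}$ is adjacent to $c_1^{(n)}$ and $c_1^{(n+1)}$, and in type D $c_0^\pm$ are adjacent to $c_1^{(1)}$; nothing else is adjacent. $H_{W,\mathbb{C}}=\bigoplus_{c\in C_W}\mathbb{C}\gamma_c$ with $H_{W,i,\mathbb{C}}=\bigoplus_{c\in C_{W,i}}\mathbb{C}\gamma_c$, Hermitian product making $\{\gamma_c\}$ orthonormal, and $\overline H_{W,\mathbb{C}}$ its $\ell^2$-completion. $J_W$ is the bilinear form with $J_W(\gamma_c,\gamma_{c'})=1$ if $c=c'$, $-1$ if $c\in C_{W,0}$, $c'\in C_{W,1}$ adjacent, $0$ otherwise. The Coxeter element (geometrically the product $\sigma_{W,0}\circ\sigma_{W,1}$ of the monodromies around $0$ and $1$ of the fibration defined by $f_W^{(d)}$) is defined by: for $u\in H_{W,0,\mathbb{C}}$, $Cox^{(d)}_W(u)=(-1)^{d-1}\big(u+\sum_{c\in C_{W,1}}J_W(u,\gamma_c)\gamma_c-\sum_{c\in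 C_{W,1}}\sum_{e\in C_{W,0}}J_W(u,\gamma_c)J_W(\gamma_e,\gamma_c)\gamma_e\big)$; for $u\in H_{W,1,\mathbb{C}}$, $Cox^{(d)}_W(u)=(-1)^{d-1}\big(u-\sum_{c\in C_{W,0}}J_W(\gamma_c,u)\gamma_c\big)$. *)

From HB Require Import structures.
From mathcomp Require Import all_boot all_order all_algebra.
From mathcomp Require Import complex.
From mathcomp Require Import all_classical all_reals ereal sequences esum.
Set Implicit Arguments. Unset Strict Implicit. Unset Printing Implicit Defensive.
Import Order.TTheory GRing.Theory Num.Theory.
Local Open Scope ring_scope.
Local Open Scope classical_set_scope.

Inductive Wtype := WA | WD.
Definition Wtype_eqb (a b : Wtype) : bool :=
  match a, b with WA, WA | WD, WD => true | _, _ => false end.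

(* Index universe: (inl (inl n)) = c_0^{(n)}, (inl (inr n)) = c_1^{(n)},
   (inr true) = c_0^+, (inr false) = c_0^-.  Only n >= 1 is used. *)
Definition idx := ((nat + nat) + bool)%type.
Definition c0 (n : nat) : idx := inl (inl n).
Definition c1 (n : nat) : idx := inl (inr n).
Definition c0pm (b : bool) : idx := inr b.

Definition inC0b (W : Wtype) (c : idx) : bool :=
  match c with
  | inl (inl n) => (1 <= n)%N
  | inl (inr _) => false
  | inr _ => Wtype_eqb W WD
  end.
Definition inC1b (W : Wtype) (c : idx) : bool :=
  match c with
  | inl (inr n) => (1 <= n)%N
  | _ => false
  end.

Definition CW0 (W : Wtype) : set idx := [set c | inC0b W c].
Definition CW1 (W : Wtype) : set idx := [set c | inC1b W c].
Definition CW (W : Wtype) : set idx := CW0 W `|` CW1 W.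

(* adjacency of e \in C_{W,0} with c \in C_{W,1} (false whenever e \notin C_{W,0}
   or c \notin C_{W,1}) *)
Definition adj01 (W : Wtype) (e c : idx) : bool :=
  match e, c with
  | inl (inl n), inl (inr m) => (1 <= n)%N && ((m == n) || (m == n.+1))
  | inr _, inl (inr m) => Wtype_eqb W WD && (m == 1)%N
  | _, _ => false
  end.

Section Cox.
Variable R : realType.
Local Notation C := (R[i]).

Definition gamma (c : idx) : idx -> C := fun x => if x == c then 1 else 0.

Definition JW (W : Wtype) (c c' : idx) : C :=
  if c == c' then 1 else if adj01 W c c' then -1 else 0.

Definition inH (W : Wtype) (u : idx -> C) : Prop :=
  finite_set [set c | u c != 0] /\ (forall c, ~ CW W c -> u c = 0).

(* bilinear extension: J_W(u, gamma_c) and J_W(gamma_c, u) for u \in H_{W,C} *)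
Definition JWl (W : Wtype) (u : idx -> C) (c : idx) : C :=
  \sum_(c' \in CW W) u c' * JW W c' c.
Definition JWr (W : Wtype) (c : idx) (u : idx -> C) : C :=
  \sum_(c' \in CW W) JW W c c' * u c'.

Definition sgn (d : nat) : C := (-1) ^+ (d.-1).

Definition Cox0 (W : Wtype) (d : nat) (u : idx -> C) : idx -> C := fun x =>
  sgn d * (u x + \sum_(c \in CW1 W) JWl W u c * gamma c x
               - \sum_(c \in CW1 W) \sum_(e \in CW0 W)
                   JWl W u c * JW W e c * gamma e x).
Definition Cox1 (W : Wtype) (d : nat) (u : idx -> C) : idx -> C := fun x =>
  sgn d * (u x - \sum_(c \in CW0 W) JWr W c u * gamma c x).

(* Cox on H_{W,C} = H_{W,0,C} (+) H_{W,1,C} *)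
Definition CoxW (W : Wtype) (d : nat) (u : idx -> C) : idx -> C := fun x =>
  Cox0 W d (fun y => if inC0b W y then u y else 0) x
  + Cox1 W d (fun y => if inC1b W y then u y else 0) x.

Definition sqmod (z : C) : R := (@complex.Re R z) ^+ 2 + (@complex.Im R z) ^+ 2.

Definition l2sq (W : Wtype) (u : idx -> C) : \bar R :=
  (\esum_(c in CW W) (sqmod (u c))%:E)%E.

(* the l^2-completion \bar H_{W,C} *)
Definition inL2 (W : Wtype) (u : idx -> C) : Prop :=
  (forall c, ~ CW W c -> u c = 0) /\ (l2sq W u < +oo)%E.

Definition bounded_op (W : Wtype) (T : (idx -> C) -> (idx -> C)) : Prop :=
  (forall u, inL2 W u -> inL2 W (T u)) /\
  (forall (a : C) u v, inL2 W u -> inL2 W v ->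
      T (fun c => a * u c + v c) = (fun c => a * T u c + T v c)) /\
  (exists M : R, forall u, inL2 W u -> (l2sq W (T u) <= (M ^+ 2)%:E * l2sq W u)%E).

End Cox.

(* Write K01 for the operator that moves the C_{W,0}-coefficients of a vector to the
   C_{W,1}-positions, summing over neighbours, and K10 for its transpose.  Unwinding
   J_W gives Cox = (-1)^(d-1) (1 + K10) (1 - K01).  Since K01 and K10 change the parity
   of the support, they square to zero, so (-1)^(d-1) (1 + K01) (1 - K10) is a
   two-sided inverse.  Every vertex has at most four neighbours, listed by four
   injective partial maps of the index set, so K01 and K10 are sums of four partial
   isometries of l^2; hence both formulas define bounded operators on the completion. *)

From HB Require Import structures.
From mathcomp Require Import all_boot all_order all_algebra.
From mathcomp Require Import complex.
From mathcomp Require Import all_classical all_reals ereal sequences esum.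
From mathcomp Require Import ring.
Set Implicit Arguments. Unset Strict Implicit. Unset Printing Implicit Defensive.
Import Order.TTheory GRing.Theory Num.Theory.
Local Open Scope ring_scope.
Local Open Scope classical_set_scope.

Section SquaredModulus.
Variable R : realType.
Implicit Types z w : R[i].

Lemma sqmod_ge0 z : 0 <= sqmod z.
Proof. by rewrite addr_ge0 // sqr_ge0. Qed.

Lemma sqmod0 : sqmod (0 : R[i]) = 0.
Proof. by rewrite /sqmod /= expr0n add0r. Qed.

Lemma sqmodM z w : sqmod (z * w) = sqmod z * sqmod w.
Proof. by case: z => a b; case: w => c e; rewrite /sqmod /=; ring. Qed.

Lemma sqmodD_le z w : sqmod (z + w) <= 2 * (sqmod z + sqmod w).
Proof.
case: z => a b; case: w => c e; rewrite /sqmod /= -subr_ge0.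
have -> : 2 * (a ^+ 2 + b ^+ 2 + (c ^+ 2 + e ^+ 2)) - ((a + c) ^+ 2 + (b + e) ^+ 2)
  = (a - c) ^+ 2 + (b - e) ^+ 2 by ring.
by rewrite addr_ge0 // sqr_ge0.
Qed.

Lemma sqmod_sgn d : sqmod (sgn R d) = 1.
Proof.
rewrite /sgn; elim: d.-1 => [|n IHn]; first by rewrite /sqmod /=; ring.
by rewrite exprS sqmodM IHn mulr1 /sqmod /=; ring.
Qed.

Lemma sqmodN z : sqmod (- z) = sqmod z.
Proof. by case: z => a b; rewrite /sqmod /= !sqrrN. Qed.

Lemma sgn_mulss d : sgn R d * sgn R d = 1.
Proof. by rewrite /sgn -exprMn mulrNN mulr1 expr1n. Qed.

End SquaredModulus.

Section L2Operators.
Variables (R : realType) (T : choiceType) (A : set T).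
Local Notation vec := (T -> R[i]).
Local Notation op := (vec -> vec).

Definition l2norm2 (u : vec) : \bar R := (\esum_(c in A) (sqmod (u c))%:E)%E.

Definition l2_bounded (O : op) :=
  exists M : R, 0 <= M /\ forall u, (l2norm2 (O u) <= M%:E * l2norm2 u)%E.

Definition supported (u : vec) := forall c, ~ A c -> u c = 0.

Lemma l2norm2D_le u v :
  (l2norm2 (u + v)%R <= 2%:E * (l2norm2 u + l2norm2 v))%E.
Proof.
have ge0 (w : vec) c : (0 <= (sqmod (w c))%:E)%E by rewrite lee_fin sqmod_ge0.
rewrite /l2norm2 -esumD // -[2%R]/(1 + 1)%R EFinD ge0_muleDl ?lee_fin // mul1e.
rewrite -esumD => [|c _|c _]; try by rewrite adde_ge0.
apply: le_esum => c _; rewrite -!EFinD lee_fin.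
by apply: le_trans (sqmodD_le _ _) _; rewrite mulrDl mul1r.
Qed.

Lemma eq_l2_bounded O O' : O =1 O' -> l2_bounded O' -> l2_bounded O.
Proof. by move=> OO' [M bM]; exists M; under eq_forall do rewrite OO'. Qed.

Lemma l2_bounded_id : l2_bounded id.
Proof. by exists 1; split => // u; rewrite mul1e. Qed.

Lemma l2_bounded_add O1 O2 : l2_bounded O1 -> l2_bounded O2 -> l2_bounded (O1 + O2).
Proof.
move=> [M1 [M1_ge0 le1]] [M2 [M2_ge0 le2]]; exists (2 * (M1 + M2)).
split; first by rewrite mulr_ge0 // addr_ge0.
move=> u; apply: le_trans (l2norm2D_le _ _) _.
rewrite EFinM -muleA lee_wpmul2l ?lee_fin // EFinD ge0_muleDl ?lee_fin //.
exact: leeD.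
Qed.

Lemma l2norm2Z a u : sqmod a = 1 -> l2norm2 (a *: u) = l2norm2 u.
Proof. by move=> a1; apply: eq_esum => c _; rewrite fctE sqmodM a1 mul1r. Qed.

Lemma l2_bounded_scale a O : sqmod a = 1 -> l2_bounded O -> l2_bounded (a *: O).
Proof. by move=> a1 [M [M_ge0 le]]; exists M; split => // u; rewrite fctE l2norm2Z. Qed.

Lemma l2norm2N u : l2norm2 (- u) = l2norm2 u.
Proof. by apply: eq_esum => c _; rewrite fctE sqmodN. Qed.

Lemma l2_bounded_opp O : l2_bounded O -> l2_bounded (- O).
Proof. by move=> [M [M_ge0 le]]; exists M; split => // u; rewrite fctE l2norm2N. Qed.

Lemma l2_bounded_comp O1 O2 : l2_bounded O1 -> l2_bounded O2 -> l2_bounded (O1 \o O2).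
Proof.
move=> [M1 [M1_ge0 le1]] [M2 [M2_ge0 le2]]; exists (M1 * M2).
split=> [|u]; first by rewrite mulr_ge0.
by rewrite EFinM -muleA; apply: le_trans (le1 _) (lee_wpmul2l _ (le2 _)); rewrite lee_fin.
Qed.

Lemma l2_bounded0 : l2_bounded 0.
Proof.
exists 0; split=> // u; rewrite mul0e /l2norm2 esum1 // => c _.
by rewrite -[(0 : op) u c]/0 sqmod0.
Qed.

Lemma l2_bounded_sum (I : finType) (F : I -> op) :
  (forall i, l2_bounded (F i)) -> l2_bounded (\sum_i F i).
Proof.
by move=> bF; apply: big_ind => //; [exact: l2_bounded0|exact: l2_bounded_add].
Qed.

Lemma le_esum_subset (B C : set T) (f : T -> \bar R) : B `<=` C ->
  (forall x, 0 <= f x)%E -> (\esum_(x in B) f x <= \esum_(x in C) f x)%E.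
Proof.
move=> BC f_ge0; rewrite [leRHS](esumID B) //.
rewrite (_ : C `&` B = B); last by apply/seteqP; split => [x []//|x Bx]; split => //; exact: BC.
by apply: leeDl; apply: esum_ge0.
Qed.

Definition pcomp (σ : T -> option T) : op := fun v x => oapp v 0 (σ x).

Lemma l2norm2_pcomp σ τ v : ocancel σ τ -> (forall x y, σ x = Some y -> A y) ->
  (l2norm2 (pcomp σ v) <= l2norm2 v)%E.
Proof.
move=> στ σA; rewrite /l2norm2.
rewrite (esumID [set x | σ x]); last by move=> *; rewrite lee_fin sqmod_ge0.
rewrite [X in (_ + X)%E]esum1 ?adde0; last first.
  by move=> x [_ /=]; rewrite /pcomp; case: (σ x) => //= _; rewrite sqmod0.
rewrite (eq_esum (b := fun x => (sqmod (v (odflt x (σ x))))%:E)); last first.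
  by move=> x [_ /=]; rewrite /pcomp; case: (σ x).
rewrite -(esum_image _ (fun x => odflt x (σ x)) (fun y => (sqmod (v y))%:E)); last first.
  move=> x x' /set_mem [_ /=] + /set_mem [_ /=]; move: (στ x) (στ x').
  by case: (σ x) => [y|] //= <-; case: (σ x') => [y'|] //= <- _ _ ->.
apply: le_esum_subset => [y [x [_ /=]]|y]; last by rewrite lee_fin sqmod_ge0.
by case E: (σ x) => [z|] //= _ <-; exact: σA E.
Qed.

Lemma l2_bounded_pcomp σ τ : ocancel σ τ -> (forall x y, σ x = Some y -> A y) ->
  l2_bounded (pcomp σ).
Proof. by move=> στ σA; exists 1; split=> // v; rewrite mul1e (l2norm2_pcomp _ στ σA). Qed.

End L2Operators.

Section NeighbourSums.
Variables (R : realType) (T : choiceType) (I : finType) (σ : I -> T -> option T).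
Local Notation vec := (T -> R[i]).

Definition nbr_sum : vec -> vec := \sum_i pcomp (R := R) (σ i).

Lemma nbr_sumE v x : nbr_sum v x = \sum_i oapp v 0 (σ i x).
Proof. by rewrite /nbr_sum fct_sumE fct_sumE. Qed.

Lemma nbr_sum_is_linear : linear nbr_sum.
Proof.
move=> a u v; apply/funext => x; rewrite !fctE !nbr_sumE scaler_sumr -big_split.
by apply: eq_bigr => i _; case: (σ i x) => //=; rewrite scaler0 addr0.
Qed.

HB.instance Definition _ := GRing.isLinear.Build R[i] vec vec *:%R nbr_sum nbr_sum_is_linear.

Variables (P Q : set T).
Hypothesis σPQ : forall i x y, σ i x = Some y -> P x /\ Q y.

Lemma nbr_sum_out v x : ~ P x -> nbr_sum v x = 0.
Proof.
move=> Px; rewrite nbr_sumE big1 // => i _.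
by case E: (σ i x) => [y|] //; case: Px; case: (σPQ E).
Qed.

Lemma eq_nbr_sum v w : (forall y, Q y -> v y = w y) -> nbr_sum v = nbr_sum w.
Proof.
move=> vw; apply/funext => x; rewrite !nbr_sumE; apply: eq_bigr => i _.
by case E: (σ i x) => [y|] //=; apply: vw; case: (σPQ E).
Qed.

Lemma nbr_sum_nilpotent v : (forall y, Q y -> ~ P y) -> nbr_sum (nbr_sum v) = 0.
Proof. by move=> QnP; rewrite (@eq_nbr_sum _ 0) ?linear0 // => y /QnP /nbr_sum_out. Qed.

Lemma l2_bounded_nbr_sum (A : set T) (τ : I -> T -> T) :
  (forall i, ocancel (σ i) (τ i)) -> Q `<=` A -> l2_bounded A nbr_sum.
Proof.
move=> στ QA; apply: l2_bounded_sum => i; apply: (@l2_bounded_pcomp R T A _ _ (στ i)).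
by move=> x y /σPQ[_ /QA].
Qed.

End NeighbourSums.

Section Unipotent.
Variables (K : pzRingType) (V : lmodType K).

Definition idD (f : V -> V) : V -> V := fun v => v + f v.
Definition idB (f : V -> V) : V -> V := fun v => v - f v.

Variable f : {linear V -> V}.

Lemma idD_is_linear : linear (idD f).
Proof. by move=> a u v; rewrite /idD linearP scalerDr addrACA. Qed.

Lemma idB_is_linear : linear (idB f).
Proof. by move=> a u v; rewrite /idB linearP scalerBr opprD addrACA. Qed.

HB.instance Definition _ := GRing.isLinear.Build K V V *:%R (idD f) idD_is_linear.
HB.instance Definition _ := GRing.isLinear.Build K V V *:%R (idB f) idB_is_linear.

Hypothesis ff0 : forall v, f (f v) = 0.

Lemma idBK : cancel (idB f) (idD f).
Proof. by move=> v; rewrite /idD /idB linearB ff0 subr0 subrK. Qed.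

Lemma idDK : cancel (idD f) (idB f).
Proof. by move=> v; rewrite /idD /idB linearD ff0 addr0 addrK. Qed.

End Unipotent.

Section UnipotentProducts.
Variables (R : realType) (T : choiceType) (A : set T).
Local Notation vec := (T -> R[i]).

Definition cox_prod (F G : vec -> vec) d (u : vec) : vec := sgn R d *: idD F (idB G u).

Variables (F G : {linear vec -> vec}) (d : nat).

Lemma cox_prod_is_linear : linear (cox_prod F G d).
Proof.
move=> a u v; rewrite /cox_prod.
have -> : idD F (idB G (a *: u + v)) = a *: idD F (idB G u) + idD F (idB G v).
  by rewrite !linearP.
by rewrite scalerDr !scalerA mulrC.
Qed.

Lemma cox_prodK : (forall v, F (F v) = 0) -> (forall v, G (G v) = 0) ->
  cancel (cox_prod F G d) (cox_prod G F d).
Proof.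
move=> FF0 GG0 u; rewrite /cox_prod !linearZ /= scalerA sgn_mulss scale1r.
by rewrite idDK ?idBK.
Qed.

Lemma cox_prod_supported u : (forall v, supported A (F v)) -> (forall v, supported A (G v)) ->
  supported A u -> supported A (cox_prod F G d u).
Proof.
move=> F_supp G_supp u_supp x Ax.
by rewrite /cox_prod /idD /idB !fctE u_supp // F_supp // G_supp // !subr0 addr0 scaler0.
Qed.

Lemma l2_bounded_cox_prod : l2_bounded A F -> l2_bounded A G -> l2_bounded A (cox_prod F G d).
Proof.
pose O := sgn R d *: ((id + (F : vec -> vec)) \o (id - (G : vec -> vec))).
move=> bF bG; apply: (@eq_l2_bounded _ _ _ _ O).
  by move=> u; rewrite /O !fctE.
apply: (l2_bounded_scale (sqmod_sgn R d)); apply: l2_bounded_comp.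
  exact/l2_bounded_add/bF/l2_bounded_id.
exact/l2_bounded_add/l2_bounded_opp/bG/l2_bounded_id.
Qed.

End UnipotentProducts.

Lemma fsbig_seqE (T : choiceType) (V : nmodType) (A : set T) (s : seq T) (F : T -> V) :
    uniq s -> (forall i, A i -> F i != 0 -> i \in s) -> (forall i, i \in s -> ~ A i -> F i = 0) ->
  \sum_(i \in A) F i = \sum_(i <- s) F i.
Proof.
move=> s_uniq A_s sA0.
rewrite (fsbigE (seq.filter (fun i => `[< A i >]) s)).
- rewrite big_filter_cond [RHS](bigID (fun i => `[< A i >])) /=.
  rewrite [X in _ = _ + X]big1_seq ?addr0.
    apply: eq_bigl => i; apply/idP/idP => [/andP[]//|Ai].
    by rewrite Ai mem_set //; exact/asboolP.
  by move=> i /andP[/asboolP Ai si]; exact: sA0.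
- exact: filter_uniq.
- by move=> i /=; rewrite mem_filter => /andP[/asboolP].
move=> i Ai; rewrite mem_filter => /negP si; apply/eqP/negP => /negP/(A_s _ Ai) Fi.
by apply: si; rewrite Fi andbT; apply/asboolP.
Qed.

Section Neighbours.
Variable W : Wtype.

(* [nbr0 j] lists the C_{W,0}-neighbours of c_1^(m): c_0^(m), c_0^(m-1) and, in type D
   for m = 1, c_0^+ and c_0^-; [nbr1 j] lists the C_{W,1}-neighbours of a vertex of
   C_{W,0}. *)

Definition nbr0 (j : bool + bool) (x : idx) : option idx :=
  match x, j with
  | inl (inr m), inl false => if (0 < m)%N then Some (c0 m) else None
  | inl (inr m), inl true => if (1 < m)%N then Some (c0 m.-1) else None
  | inl (inr m), inr b => if Wtype_eqb W WD && (m == 1)%N then Some (c0pm b) else None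
  | _, _ => None
  end.

Definition nbr1 (j : bool + bool) (x : idx) : option idx :=
  match x, j with
  | inl (inl n), inl b => if (0 < n)%N then Some (c1 (n + b)) else None
  | inr b', inr b => if Wtype_eqb W WD && (b' == b) then Some (c1 1) else None
  | _, _ => None
  end.

Definition nbr0_inv (j : bool + bool) (y : idx) : idx :=
  match j, y with
  | inl b, inl (inl n) => c1 (n + b)
  | inr _, _ => c1 1
  | _, _ => y
  end.

Definition nbr1_inv (j : bool + bool) (y : idx) : idx :=
  match j, y with
  | inl b, inl (inr m) => c0 (m - b)
  | inr b, _ => c0pm b
  | _, _ => y
  end.

Lemma nbr0P j x y : nbr0 j x = Some y -> CW1 W x /\ CW0 W y.
Proof.
case: x => [[n|m]|b] //; case: j => [[]|b'] //=; case: ifP => // + [<-];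
  rewrite /CW0 /CW1 /=; [by case: m => [|[|m]]|by move=> ->|by case/andP=> -> /eqP ->].
Qed.

Lemma nbr1P j x y : nbr1 j x = Some y -> CW0 W x /\ CW1 W y.
Proof.
case: x => [[n|m]|b] //; case: j => [b'|b'] //=; case: ifP => // + [<-];
  rewrite /CW0 /CW1 /=; [by move=> n0; rewrite addn_gt0 n0|by case/andP=> ->].
Qed.

Lemma nbr0K j : ocancel (nbr0 j) (nbr0_inv j).
Proof.
case: j => [[]|b] [[n|m]|b'] //=; case: ifP => //=.
- by case: m => [|m] //; rewrite addn1.
- by rewrite addn0.
- by case/andP=> _ /eqP ->.
Qed.

Lemma nbr1K j : ocancel (nbr1 j) (nbr1_inv j).
Proof.
case: j => [b|b] [[n|m]|b'] //=; case: ifP => //=.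
- by rewrite addnK.
- by case/andP=> _ /eqP ->.
Qed.

Lemma CW0_notC1 x : CW0 W x -> ~ CW1 W x.
Proof. by case: x => [[n|m]|b]. Qed.

Lemma CW1_notC0 x : CW1 W x -> ~ CW0 W x.
Proof. by case: x => [[n|m]|b]. Qed.

End Neighbours.

Section Coxeter.
Variables (R : realType) (W : Wtype).
Local Notation vec := (idx -> R[i]).
Local Notation K01 := (nbr_sum (R := R) (nbr0 W)).
Local Notation K10 := (nbr_sum (R := R) (nbr1 W)).

Lemma K01_out v x : ~ CW1 W x -> K01 v x = 0.
Proof. exact/nbr_sum_out/nbr0P. Qed.

Lemma K10_out v x : ~ CW0 W x -> K10 v x = 0.
Proof. exact/nbr_sum_out/nbr1P. Qed.

Lemma eq_K01 v w : (forall y, CW0 W y -> v y = w y) -> K01 v = K01 w.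
Proof. exact/eq_nbr_sum/nbr0P. Qed.

Lemma eq_K10 v w : (forall y, CW1 W y -> v y = w y) -> K10 v = K10 w.
Proof. exact/eq_nbr_sum/nbr1P. Qed.

Lemma K01K01 v : K01 (K01 v) = 0.
Proof. exact/(nbr_sum_nilpotent (@nbr0P W))/CW0_notC1. Qed.

Lemma K10K10 v : K10 (K10 v) = 0.
Proof. exact/(nbr_sum_nilpotent (@nbr1P W))/CW1_notC0. Qed.

Lemma fsbig_gamma (A : set idx) (g : vec) x :
  \sum_(c \in A) g c * gamma R c x = if `[< A x >] then g x else 0.
Proof.
case: asboolP => Ax; last first.
  by apply: fsbig1 => c Ac; rewrite /gamma; case: eqP => [xc|_]; [rewrite xc in Ax|rewrite mulr0].
rewrite (@fsbig_seqE _ _ A [:: x]) ?big_seq1 /gamma ?eqxx ?mulr1 // => [c _|c].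
  by case: (x =P c) => [->|_]; rewrite ?mem_head // mulr0 eqxx.
by rewrite inE => /eqP ->.
Qed.

Lemma adj01_CW e c : adj01 W e c -> CW0 W e /\ CW1 W c.
Proof.
case: e => [[n|n]|b]; case: c => [[m|m]|b'] //= /andP[e0].
  by case/orP=> /eqP ->; split.
by move/eqP ->.
Qed.

Lemma adj01_c1 e m : adj01 W e (c1 m) -> e \in [:: c0 m; c0 m.-1; c0pm true; c0pm false].
Proof.
case: e => [[n|n]|[]] //= /andP[_]; rewrite !inE ?eqxx ?orbT //.
by case/orP=> /eqP ->; rewrite eqxx ?orbT.
Qed.

Lemma adj01_c0 n c : adj01 W (c0 n) c -> c \in [:: c1 n; c1 n.+1].
Proof. by case: c => [[m|m]|b] //= /andP[_ /orP[] /eqP ->]; rewrite !inE eqxx ?orbT. Qed.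

Lemma adj01_c0pm b c : adj01 W (c0pm b) c -> c = c1 1.
Proof. by case: c => [[m|m]|b'] //= /andP[_ /eqP ->]. Qed.

Lemma JW_neq0 a b : JW R W a b != 0 -> a = b \/ adj01 W a b.
Proof.
by rewrite /JW; case: (a =P b) => [->|_]; [left|case: adj01; [right|rewrite eqxx]].
Qed.

Lemma JW_outl x c : ~ CW W x -> CW W c -> JW R W x c = 0.
Proof.
move=> Nx Cc; apply/eqP/negP => /negP/JW_neq0 [xc|/adj01_CW[x0 _]]; apply: Nx.
  by rewrite xc.
by left.
Qed.

Lemma JW_outr x c : ~ CW W x -> CW W c -> JW R W c x = 0.
Proof.
move=> Nx Cc; apply/eqP/negP => /negP/JW_neq0 [xc|/adj01_CW[_ x1]]; apply: Nx.
  by rewrite -xc.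
by right.
Qed.

Lemma JWl_C1 v c : CW1 W c -> JWl W v c = v c - K01 v c.
Proof.
case: c => [[n|m]|b] //= m0.
rewrite /JWl (@fsbig_seqE _ _ _ [:: c1 m; c0 m; c0 m.-1; c0pm true; c0pm false]).
- rewrite nbr_sumE big_sumType !big_bool !big_cons big_nil /JW /= eqxx.
  by case: m m0 => [|[|m]] // _; case: W => /=; rewrite ?eqxx ?orbT /=; ring.
- case: m m0 => [|[|m]] // _; rewrite /= !inE /=.
  by rewrite (_ : (c0 m.+2 == c0 m.+1) = (m.+2 == m.+1)) // gtn_eqF.
- move=> i _; rewrite mulf_eq0 negb_or => /andP[_ /JW_neq0 [->|/adj01_c1 i_adj]].
    by rewrite mem_head.
  by rewrite in_cons i_adj orbT.
- by move=> i _ Ni; rewrite JW_outl ?mulr0 //; right.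
Qed.

Lemma JWr_C0 v c : CW0 W c -> JWr W c v = v c - K10 v c.
Proof.
rewrite /JWr nbr_sumE big_sumType !big_bool /=.
case: c => [[n|m]|b] //= Cx.
  have {}n_gt0 : (0 < n)%N := Cx.
  rewrite (@fsbig_seqE _ _ _ [:: c0 n; c1 n; c1 n.+1]).
  - by rewrite !big_cons big_nil /JW /= !eqxx addn0 addn1 n_gt0 orbT /=; ring.
  - by rewrite /= mem_seq1 (_ : (c1 n == c1 n.+1) = (n == n.+1)) // ltn_eqF.
  - move=> i _; rewrite mulf_eq0 negb_or => /andP[/JW_neq0 [<-|/adj01_c0 i_adj] _].
      by rewrite mem_head.
    by rewrite in_cons i_adj orbT.
  - by move=> i _ Ni; rewrite JW_outr ?mul0r //; left.
rewrite (@fsbig_seqE _ _ _ [:: c0pm b; c1 1]) //.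
- have {}WD : Wtype_eqb W WD := Cx.
  rewrite !big_cons big_nil /JW /= !eqxx WD /=.
  by case: b {Cx}; rewrite /=; ring.
- move=> i _; rewrite mulf_eq0 negb_or => /andP[/JW_neq0 [<-|/adj01_c0pm ->] _].
    by rewrite mem_head.
  by rewrite !inE eqxx orbT.
- by move=> i _ Ni; rewrite JW_outr ?mul0r //; left.
Qed.

Lemma fsbig_C1_JW g x : CW0 W x -> \sum_(c \in CW1 W) g c * JW R W x c = - K10 g x.
Proof.
rewrite nbr_sumE big_sumType !big_bool /=.
case: x => [[n|m]|b] //= Cx.
  have {}n_gt0 : (0 < n)%N := Cx.
  rewrite (@fsbig_seqE _ _ _ [:: c1 n; c1 n.+1]).
  - by rewrite !big_cons big_nil /JW /= addn0 addn1 n_gt0 !eqxx orbT /=; ring.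
  - by rewrite /= mem_seq1 (_ : (c1 n == c1 n.+1) = (n == n.+1)) // ltn_eqF.
  - move=> i C1i; rewrite mulf_eq0 negb_or => /andP[_ /JW_neq0 [ni|/adj01_c0 //]].
    by rewrite -ni in C1i.
  - by move=> i; rewrite !inE => /orP[] /eqP -> []; rewrite /CW1 /= ?n_gt0.
have {}WD : Wtype_eqb W WD := Cx.
rewrite (@fsbig_seqE _ _ _ [:: c1 1]) //.
- by rewrite big_seq1 /JW /= WD; case: b {Cx}; rewrite /=; ring.
- move=> i C1i; rewrite mulf_eq0 negb_or => /andP[_ /JW_neq0 [bi|/adj01_c0pm ->]].
    by rewrite -bi in C1i.
  by rewrite mem_head.
- by move=> i; rewrite mem_seq1 => /eqP -> [].
Qed.

Lemma Cox0E d u : supported (CW0 W) u ->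
  Cox0 W d u = sgn R d *: (u - K01 u - K10 (K01 u)).
Proof.
move=> u0; have JWlE c : CW1 W c -> JWl W u c = - K01 u c.
  by move=> C1c; rewrite JWl_C1 // u0 ?sub0r //; exact: CW1_notC0.
have K10_JWl : K10 (JWl W u) = - K10 (K01 u) by rewrite -linearN; apply: eq_K10.
apply/funext => x; rewrite /Cox0 !fsbig_gamma.
under eq_fsbigr => c _ do rewrite fsbig_gamma.
rewrite !fctE -[sgn R d *: _]/(sgn R d * _).
case: (asboolP (CW0 W x)) => [C0x|N0x].
- have N1x := CW0_notC1 C0x.
  rewrite fsbig_C1_JW // K10_JWl (asboolF N1x) (K01_out _ N1x) !fctE; ring.
rewrite [X in _ - X]fsbig1 // u0 // (K10_out _ N0x).
case: (asboolP (CW1 W x)) => [C1x|N1x]; last by rewrite (K01_out _ N1x); ring.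
by rewrite JWlE //; ring.
Qed.

Lemma Cox1E d u : supported (CW1 W) u -> Cox1 W d u = sgn R d *: (u + K10 u).
Proof.
move=> u1; apply/funext => x; rewrite /Cox1 fsbig_gamma !fctE -[sgn R d *: _]/(sgn R d * _).
case: (asboolP (CW0 W x)) => [C0x|N0x]; last by rewrite (K10_out _ N0x); ring.
by rewrite JWr_C0 // u1 //; [ring|exact: CW0_notC1].
Qed.

Definition coxeter_op d : vec -> vec := cox_prod K10 K01 d.
Definition coxeter_inv d : vec -> vec := cox_prod K01 K10 d.

Lemma CoxW_E d u : supported (CW W) u -> CoxW W d u = coxeter_op d u.
Proof.
move=> uW; set u0 := fun y => if inC0b W y then u y else 0.
set u1 := fun y => if inC1b W y then u y else 0.
have u0_C0 : supported (CW0 W) u0 by rewrite /u0 => y /negP/negbTE ->.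
have u1_C1 : supported (CW1 W) u1 by rewrite /u1 => y /negP/negbTE ->.
have u01 : u0 + u1 = u.
  apply/funext => y; rewrite fctE /u0 /u1.
  case C0y: (inC0b W y); first by rewrite (negbTE (introN idP (CW0_notC1 C0y))) addr0.
  by case C1y: (inC1b W y); rewrite ?add0r // uW // => -[|]; rewrite /CW0 /CW1 /= ?C0y ?C1y.
have -> : CoxW W d u = Cox0 W d u0 + Cox1 W d u1 by [].
rewrite Cox0E // Cox1E // (@eq_K01 u0 u) => [|y C0y]; last by rewrite /u0 C0y.
rewrite (@eq_K10 u1 u) => [|y C1y]; last by rewrite /u1 C1y.
rewrite /coxeter_op /cox_prod /idD /idB.
have -> : K10 (u - K01 u) = K10 u - K10 (K01 u) by apply: linearB.
move: (K01 u) (K10 u) (K10 (K01 u)) => a b c; rewrite -u01; apply/funext => x.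
by rewrite !fctE -![sgn R d *: _]/(sgn R d * _); ring.
Qed.

Lemma coxeter_opK d : cancel (coxeter_op d) (coxeter_inv d).
Proof. exact: cox_prodK K10K10 K01K01. Qed.

Lemma coxeter_invK d : cancel (coxeter_inv d) (coxeter_op d).
Proof. exact: cox_prodK K01K01 K10K10. Qed.

Lemma K01_supported v : supported (CW W) (K01 v).
Proof. by move=> x Nx; apply: K01_out => C1x; apply: Nx; right. Qed.

Lemma K10_supported v : supported (CW W) (K10 v).
Proof. by move=> x Nx; apply: K10_out => C0x; apply: Nx; left. Qed.

Lemma l2_bounded_K01 : l2_bounded (CW W) K01.
Proof. by apply: (l2_bounded_nbr_sum R (@nbr0P W) (@nbr0K W)) => y; left. Qed.

Lemma l2_bounded_K10 : l2_bounded (CW W) K10.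
Proof. by apply: (l2_bounded_nbr_sum R (@nbr1P W) (@nbr1K W)) => y; right. Qed.

Lemma bounded_opP (T : vec -> vec) :
    (forall u, supported (CW W) u -> supported (CW W) (T u)) ->
    linear T -> l2_bounded (CW W) T -> bounded_op W T.
Proof.
move=> T_supp T_lin [M [M_ge0 TM]]; split; [|split].
- move=> u [u_supp u_fin]; split; first exact: T_supp.
  by apply: le_lt_trans (TM u) _; rewrite lte_mul_pinfty // lee_fin.
- by move=> a u v _ _; exact: T_lin.
by exists (Num.sqrt M); move=> u _; rewrite sqr_sqrtr //; exact: TM.
Qed.

Lemma bounded_op_coxeter_op d : bounded_op W (coxeter_op d).
Proof.
apply: bounded_opP; [|exact: cox_prod_is_linear|].
  by move=> u; apply: cox_prod_supported; [exact: K10_supported|exact: K01_supported].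
exact: l2_bounded_cox_prod l2_bounded_K10 l2_bounded_K01.
Qed.

Lemma bounded_op_coxeter_inv d : bounded_op W (coxeter_inv d).
Proof.
apply: bounded_opP; [|exact: cox_prod_is_linear|].
  by move=> u; apply: cox_prod_supported; [exact: K01_supported|exact: K10_supported].
exact: l2_bounded_cox_prod l2_bounded_K01 l2_bounded_K10.
Qed.

End Coxeter.

Unset Implicit Arguments.

Theorem mainTheorem8 (R : realType) (W : Wtype) (d : nat) (hd : (1 <= d)%N) :
  exists T : (idx -> R[i]) -> (idx -> R[i]),
    (forall u, inH W u -> T u = CoxW W d u) /\
    bounded_op W T /\
    exists S : (idx -> R[i]) -> (idx -> R[i]),
      bounded_op W S /\
      (forall u, inL2 W u -> S (T u) = u /\ T (S u) = u).
Proof.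
exists (@coxeter_op R W d); split; first by move=> u [_ u_supp]; rewrite CoxW_E.
split; first exact: bounded_op_coxeter_op.
exists (@coxeter_inv R W d); split; first exact: bounded_op_coxeter_inv.
by move=> u _; rewrite coxeter_opK coxeter_invK.
Qed.
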